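(* Let $d\ge2$, $t\ge 0$, and let $\Phi_t:\mathbb M_d\to\mathbb M_d$, $\Phi_t(X)=\mathrm{Tr}(X)I_d-tX$. Fix $\alpha\in[1,d]$ and write $k:=\lfloor\alpha\rfloor$, $\theta:=\alpha-k\in[0,1)$. Then $$\Phi_t\in\mathsf P_\alpha\iff t\le t^\ast_\alpha:=\frac{k+\theta^2}{(k+\theta)^2},$$ and in fact $\lambda_\alpha(C_{\Phi_t})=1-t\frac{(k+\theta)^2}{k+\theta^2}$. Moreover the threshold is sharp: if $t>t^\ast_\alpha$ there exists $x\in\mathcal V_\alpha$ with $\langle x,C_{\Phi_t}x\rangle<0$; if $\alpha\in(k,k+1)$ one may take $x$ with Schmidt coefficients $\frac{1}{\sqrt{k+\theta^2}}$ ($k$ times), $\frac{\theta}{\sqrt{k+\theta^2}}$, and $0$ otherwise; if $\alpha=d$ one may take $x=\omega:=\frac1{\sqrt d}\sum_{i=1}^de_i\otimes e_i$.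
   Context: Here $n=m=d$. The Choi matrix of a linear $\Phi:\mathbb M_d\to\mathbb M_d$ is $C_\Phi=\sum_{i,j}E_{ij}\otimes\Phi(E_{ij})$ (matrix units $E_{ij}$; one has $C_{\Phi_t}=I\otimes I-td\,\omega\omega^\ast$). Schmidt coefficients $s_1(\psi)\ge\dots\ge s_d(\psi)\ge0$ of $\psi=\sum a_{ij}e_i\otimes e_j$ are the singular values of $[a_{ij}]$. For $\alpha\in[1,d]$ with $k=\lfloor\alpha\rfloor$, $\theta=\alpha-k$, $r=\lceil\alpha\rceil$, a unit vector $\psi$ is $\alpha$-admissible if $s_j(\psi)=0$ for $j\ge r+1$ and, when $\theta>0$, $s_{k+1}(\psi)\le\frac\theta k\sum_{j=1}^ks_j(\psi)$; $\mathcal V_\alpha$ is the set of these. For Hermitian $W$, $\lambda_\alpha(W):=\min\{\langle x,Wx\rangle:x\in\mathcal V_\alpha\}$. A Hermitian-preserving $\Phi$ is in $\mathsf P_\alpha$ if $\langle\psi,C_\Phi\psi\rangle\ge0$ for all $\psi\in\mathcal V_\alpha$ (equivalently $\lambda_\alpha(C_\Phi)\ge0$). *)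

From HB Require Import structures.
From mathcomp Require Import all_boot all_order all_algebra.
From mathcomp Require Import reals complex mxtens.
Set Implicit Arguments. Unset Strict Implicit. Unset Printing Implicit Defensive.
Import Order.TTheory GRing.Theory Num.Theory.
Local Open Scope ring_scope.
Local Open Scope complex_scope.

Section Defs.
Variable R : realType.
Local Notation C := R[i].

Definition cconj_mx m n (A : 'M[C]_(m, n)) : 'M[C]_(m, n) := map_mx (fun z => z^*) A.
Definition adjmx m n (A : 'M[C]_(m, n)) : 'M[C]_(n, m) := (cconj_mx A)^T.
Definition is_hermitian n (A : 'M[C]_n) : Prop := adjmx A = A.
Definition is_unitary n (U : 'M[C]_n) : Prop := U *m adjmx U = 1%:M.

(* Vectors of C^d (x) C^d are column vectors of size d*d, the basis vector
   e_i (x) e_j sitting at index mxtens_index (i,j) (the convention of tensmx).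
   coefmx psi is the coefficient matrix [a_ij] with psi = sum a_ij e_i (x) e_j. *)
Definition coefmx d (psi : 'cV[C]_(d * d)) : 'M[C]_d :=
  \matrix_(i, j) psi (mxtens_index (i, j)) 0.

Definition is_unit_vec n (x : 'cV[C]_n) : Prop := (adjmx x *m x) 0 0 = 1.

Definition qform n (W : 'M[C]_n) (x : 'cV[C]_n) : C := (adjmx x *m W *m x) 0 0.

(* s (0-indexed: s i = s_{i+1}) is the nonincreasing sequence of Schmidt
   coefficients (= singular values) of the coefficient matrix A:
   A = U diag(s) V with U, V unitary, s >= 0 nonincreasing. *)
Definition schmidt_coeffs d (A : 'M[C]_d) (s : 'I_d -> R) : Prop :=
  (forall i : 'I_d, 0 <= s i) /\
  (forall i j : 'I_d, (i <= j)%N -> s j <= s i) /\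
  exists U V : 'M[C]_d, is_unitary U /\ is_unitary V /\
    A = U *m diag_mx (\row_i (s i)%:C) *m V.

Definition kfloor (alpha : R) : nat := Num.truncn alpha.
Definition theta_of (alpha : R) : R := alpha - (kfloor alpha)%:R.
Definition rceil (alpha : R) : nat :=
  if theta_of alpha == 0 then kfloor alpha else (kfloor alpha).+1.

Definition admissible d (alpha : R) (psi : 'cV[C]_(d * d)) : Prop :=
  is_unit_vec psi /\
  exists s : 'I_d -> R, schmidt_coeffs (coefmx psi) s /\
    (forall j : 'I_d, (rceil alpha <= j)%N -> s j = 0) /\
    (0 < theta_of alpha ->
       forall j : 'I_d, nat_of_ord j = kfloor alpha ->
         s j <= theta_of alpha / (kfloor alpha)%:R *
                \sum_(i : 'I_d | (i < kfloor alpha)%N) s i).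

Definition is_lambda d (alpha : R) (W : 'M[C]_(d * d)) (v : R) : Prop :=
  (exists x, admissible alpha x /\ qform W x = v%:C) /\
  (forall x, admissible alpha x -> v%:C <= qform W x).

Definition choi d (Phi : 'M[C]_d -> 'M[C]_d) : 'M[C]_(d * d) :=
  \sum_(i < d) \sum_(j < d) (delta_mx i j *t Phi (delta_mx i j)).

Definition hermitian_preserving d (Phi : 'M[C]_d -> 'M[C]_d) : Prop :=
  forall X, is_hermitian X -> is_hermitian (Phi X).

Definition in_P d (alpha : R) (Phi : 'M[C]_d -> 'M[C]_d) : Prop :=
  hermitian_preserving Phi /\
  forall psi, admissible alpha psi -> 0 <= qform (choi Phi) psi.

Definition Phi_t d (t : R) (X : 'M[C]_d) : 'M[C]_d := (\tr X)%:M - t%:C *: X.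

Definition omega d : 'cV[C]_(d * d) :=
  \col_a (let ij := mxtens_unindex a in
          if ij.1 == ij.2 then (Num.sqrt (d%:R))^-1%:C else 0).

End Defs.

From Pilot Require Import Defs.
From HB Require Import structures.
From mathcomp Require Import all_boot all_order all_algebra.
From mathcomp Require Import reals complex mxtens.
From mathcomp Require Import ring lra.
Set Implicit Arguments. Unset Strict Implicit. Unset Printing Implicit Defensive.
Import Order.TTheory GRing.Theory Num.Theory.
Local Open Scope ring_scope.
Local Open Scope complex_scope.

(* The Choi matrix of Phi_t is I - t w w^T with w = sum_i e_i (x) e_i, so that
   <x, C x> = |x|^2 - t |Tr A_x|^2 for the coefficient matrix A_x of x.  Writing
   A_x = U diag(s) V with U, V unitary gives |Tr A_x| <= sum_i s_i, with equality when x
   is diagonal.  For admissible x let S be the sum of the k largest Schmidt coefficients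
   and u the sum of the others, which is at most the single coefficient s_(k+1).
   Cauchy-Schwarz gives S^2 <= k (1 - u^2) and admissibility gives k u <= theta S, and
   together these force (S + u)^2 <= (k + theta)^2 / (k + theta^2).  The coefficients
   (1, ..., 1, theta) / sqrt (k + theta^2) attain the bound, so
   lambda_alpha = 1 - t (k + theta)^2 / (k + theta^2); for alpha = d this witness is omega. *)

Lemma sum_mxtens_index (V : nmodType) m n (F : 'I_(m * n) -> V) :
  \sum_a F a = \sum_i \sum_j F (mxtens_index (i, j)).
Proof.
rewrite pair_big (reindex (@mxtens_index m n)) /=; first by apply: eq_bigr => -[].
by apply: onW_bij; exists (@mxtens_unindex m n); [exact: mxtens_indexK | exact: mxtens_unindexK].
Qed.

Lemma mxtens_index_eq m n (i k : 'I_m) (j l : 'I_n) :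
  (mxtens_index (i, j) == mxtens_index (k, l)) = (i == k) && (j == l).
Proof. by rewrite (inj_eq (can_inj (@mxtens_indexK m n))) xpair_eqE. Qed.

Lemma sum2_delta (V : pzRingType) n (i k : 'I_n) (H : 'I_n -> 'I_n -> V) :
  \sum_p \sum_q (((i == p) && (k == q))%:R * H p q) = H i k.
Proof.
rewrite (bigD1 i) //= [X in _ + X]big1 ?addr0; last first.
  by move=> p /negbTE ip; apply: big1 => q _; rewrite eq_sym ip mul0r.
rewrite (bigD1 k) //= [X in _ + X]big1 ?addr0 ?eqxx ?mul1r //.
by move=> q /negbTE kq; rewrite eq_sym kq andbF mul0r.
Qed.

Lemma cauchy_schwarz_sum (F : realDomainType) (I : finType) (P : pred I) (a : I -> F) :
  (\sum_(i | P i) a i) ^+ 2 <= (\sum_(i | P i) 1) * \sum_(i | P i) a i ^+ 2.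
Proof.
set N := \sum_(i | P i) (1 : F); set S := \sum_(i | P i) a i; set Q := \sum_(i | P i) a i ^+ 2.
have lagrange : \sum_(i | P i) \sum_(j | P j) (a i - a j) ^+ 2 = 2 * (N * Q - S ^+ 2).
  have inner i : \sum_(j | P j) (a i - a j) ^+ 2 = a i ^+ 2 * N - 2 * a i * S + Q.
    rewrite /N /S /Q !mulr_sumr -sumrB -big_split /=.
    by apply: eq_bigr => j _; ring.
  have sumQ : \sum_(i | P i) Q = N * Q.
    by rewrite /N mulr_suml; apply: eq_bigr => i _; rewrite mul1r.
  rewrite (eq_bigr _ (fun i _ => inner i)) big_split sumrB /= -!mulr_suml sumQ -mulr_sumr -/S -/Q.
  ring.
have : 0 <= \sum_(i | P i) \sum_(j | P j) (a i - a j) ^+ 2.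
  by apply: sumr_ge0 => i _; apply: sumr_ge0 => j _; exact: sqr_ge0.
rewrite lagrange; lra.
Qed.

(* Equality holds at (S, u) = (k, th) / sqrt (k + th^2), a zero of the first factor of [defect]. *)
Lemma sqr_add_mul_le (F : realFieldType) (S u k th : F) :
  1 <= k -> 0 <= th -> th < 1 -> 0 <= S -> 0 <= u ->
  S ^+ 2 <= k * (1 - u ^+ 2) -> k * u <= th * S ->
  (S + u) ^+ 2 * (k + th ^+ 2) <= (k + th) ^+ 2.
Proof.
move=> k1 th0 th1 S0 u0 hS hu.
have defect : (k + th) ^+ 2 * (S ^+ 2 + k * u ^+ 2) - k * (k + th ^+ 2) * (S + u) ^+ 2 =
   (th * S - k * u) * (S * (2 * k + th - k * th) - k * (k + 2 * th - 1) * u) by ring.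
have h1 : (k + 2 * th - 1) * (k * u) <= (k + 2 * th - 1) * (th * S) by apply: ler_wpM2l; lra.
have h2 : 0 <= S * (2 * (1 - th) * (k + th)) by apply: mulr_ge0 => //; apply: mulr_ge0; lra.
have h3 : 0 <= (th * S - k * u) * (S * (2 * k + th - k * th) - k * (k + 2 * th - 1) * u).
  by apply: mulr_ge0; nra.
have h4 : (k + th) ^+ 2 * (S ^+ 2 + k * u ^+ 2) <= (k + th) ^+ 2 * k.
  by apply: ler_wpM2l; [exact: sqr_ge0 | nra].
have : k * ((S + u) ^+ 2 * (k + th ^+ 2)) <= k * (k + th) ^+ 2 by nra.
by rewrite ler_pM2l //; lra.
Qed.

Lemma sum_ord_lt_cst (V : pzSemiRingType) d k (c : V) : (k <= d)%N ->
  \sum_(i < d | (i < k)%N) c = k%:R * c.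
Proof.
move=> kd; rewrite -(big_ord_widen _ (fun _ => c) kd).
by rewrite sumr_const card_ord mulr_natl.
Qed.

Lemma sum_ord_ge0 (V : nmodType) d k (F : 'I_d -> V) :
  (forall j : 'I_d, (k <= j)%N -> F j = 0) -> \sum_(j < d | ~~ (j < k)%N) F j = 0.
Proof. by move=> hF; apply: big1 => j; rewrite -leqNgt; exact: hF. Qed.

Lemma sum_ord_ge1 (V : nmodType) d k (F : 'I_d -> V) (hk : (k < d)%N) :
  (forall j : 'I_d, (k < j)%N -> F j = 0) ->
  \sum_(j < d | ~~ (j < k)%N) F j = F (Ordinal hk).
Proof.
move=> hF; rewrite (bigD1 (Ordinal hk)) /= ?ltnn // [X in _ + X]big1 ?addr0 //.
move=> j /andP [jk jne]; apply: hF; rewrite ltn_neqAle leqNgt jk andbT.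
by apply: contra jne => /eqP e; apply/eqP/val_inj.
Qed.

Lemma sum_ord_step (V : pzSemiRingType) d k (a b : V) (F : 'I_d -> V) :
  (k <= d)%N -> (k = d -> b = 0) ->
  (forall j : 'I_d, F j = if (j < k)%N then a else if nat_of_ord j == k then b else 0) ->
  \sum_j F j = k%:R * a + b.
Proof.
move=> kd hb hF; rewrite (bigID (fun j : 'I_d => (j < k)%N)) /=.
rewrite (eq_bigr (fun _ => a)) => [|j hj]; last by rewrite hF hj.
rewrite sum_ord_lt_cst //; congr (_ + _).
have [hk|] := ltnP k d.
  rewrite (sum_ord_ge1 hk); first by rewrite hF /= ltnn eqxx.
  by move=> j hj; rewrite hF ltnNge (ltnW hj) /= gtn_eqF.
move=> dk; rewrite hb; last by apply/eqP; rewrite eqn_leq kd dk.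
rewrite sum_ord_ge0 // => j hj.
by have := ltn_ord j; rewrite ltnNge (leq_trans dk hj).
Qed.

Section PhiT.
Variable R : realType.
Local Notation C := R[i].

Lemma adjmxM m n p (A : 'M[C]_(m, n)) (B : 'M[C]_(n, p)) :
  adjmx (A *m B) = adjmx B *m adjmx A.
Proof.
apply/matrixP => i j; rewrite !mxE rmorph_sum; apply: eq_bigr => k _.
by rewrite !mxE rmorphM mulrC.
Qed.

Lemma adjmx1 n : adjmx (1%:M : 'M[C]_n) = 1%:M.
Proof. by apply/matrixP => i j; rewrite !mxE eq_sym rmorphMn rmorph1. Qed.

Lemma unitary1 n : Defs.is_unitary (1%:M : 'M[C]_n).
Proof. by rewrite /Defs.is_unitary adjmx1 mul1mx. Qed.

Lemma unitaryM n (U V : 'M[C]_n) :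
  Defs.is_unitary U -> Defs.is_unitary V -> Defs.is_unitary (U *m V).
Proof.
rewrite /Defs.is_unitary => hU hV.
by rewrite adjmxM mulmxA -(mulmxA U) hV mulmx1 hU.
Qed.

Lemma unitary_diag_norm_le1 n (U : 'M[C]_n) i : Defs.is_unitary U -> `|U i i| <= 1.
Proof.
move=> hU; have row_norm : \sum_j `|U i j| ^+ 2 = 1.
  have := congr1 (fun M : 'M[C]_n => M i i) hU; rewrite !mxE eqxx mulr1n => <-.
  by apply: eq_bigr => j _; rewrite !mxE sqr_normc.
rewrite -(@expr_le1 _ 2) // -row_norm (bigD1 i) //= lerDl.
by apply: sumr_ge0 => j _; exact: exprn_ge0.
Qed.

Lemma mxtrace_mul_adjmx n (A : 'M[C]_n) :
  \tr (A *m adjmx A) = \sum_i \sum_j (A i j)^* * A i j.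
Proof.
by apply: eq_bigr => i _; rewrite !mxE; apply: eq_bigr => j _; rewrite !mxE mulrC.
Qed.

Lemma mxtrace_delta n (i k : 'I_n) : \tr (delta_mx i k : 'M[C]_n) = (i == k)%:R.
Proof.
rewrite /mxtrace (bigD1 i) //= [X in _ + X]big1 ?addr0; first by rewrite mxE eqxx.
by move=> p /negbTE pi; rewrite mxE pi.
Qed.

Lemma sqrnorm_coefmx d (x : 'cV[C]_(d * d)) :
  (adjmx x *m x) 0 0 = \tr (coefmx x *m adjmx (coefmx x)).
Proof.
rewrite mxtrace_mul_adjmx !mxE sum_mxtens_index.
by apply: eq_bigr => i _; apply: eq_bigr => j _; rewrite !mxE.
Qed.

Definition maxentvec d : 'cV[C]_(d * d) :=
  \col_a (if (mxtens_unindex a).1 == (mxtens_unindex a).2 then 1 else 0).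

Lemma choi_Phi_t d (t : R) :
  choi (@Phi_t R d t) = 1%:M - t%:C *: (maxentvec d *m (maxentvec d)^T).
Proof.
apply/matrixP => a b.
case: (mxtens_indexP a) => i j; case: (mxtens_indexP b) => k l.
rewrite /choi summxE.
under eq_bigr do rewrite summxE.
under eq_bigr do under eq_bigr do rewrite tensmxE [delta_mx _ _ i k]mxE.
rewrite (sum2_delta i k (fun p q => Phi_t t (delta_mx p q) j l)).
rewrite !mxE big_ord1 !mxE !mxtens_indexK /= mxtens_index_eq mxtrace_delta.
rewrite [j == i]eq_sym [l == k]eq_sym.
by case: (i == k); case: (j == l); case: (i == j); case: (k == l);
  rewrite /= ?mulr1 ?mulr0 ?mul1r ?mul0r.
Qed.

Lemma maxentvec_tr_mul d (x : 'cV[C]_(d * d)) :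
  ((maxentvec d)^T *m x) 0 0 = \tr (coefmx x).
Proof.
rewrite !mxE sum_mxtens_index; apply: eq_bigr => i _.
rewrite (bigD1 i) //= [X in _ + X]big1 ?addr0.
  by rewrite !mxE mxtens_indexK /= eqxx mul1r.
by move=> j /negbTE ji; rewrite !mxE mxtens_indexK /= eq_sym ji mul0r.
Qed.

Lemma adjmx_mul_maxentvec d (x : 'cV[C]_(d * d)) :
  (adjmx x *m maxentvec d) 0 0 = (\tr (coefmx x))^*.
Proof.
rewrite -maxentvec_tr_mul !mxE rmorph_sum; apply: eq_bigr => a _.
by rewrite !mxE rmorphM mulrC; case: ifP; rewrite ?rmorph1 ?rmorph0.
Qed.

Lemma qform_choi_Phi_t d (t : R) (x : 'cV[C]_(d * d)) :
  qform (choi (@Phi_t R d t)) x = (adjmx x *m x) 0 0 - t%:C * `|\tr (coefmx x)| ^+ 2.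
Proof.
rewrite /qform choi_Phi_t mulmxBr mulmx1 mulmxBl -scalemxAr -scalemxAl.
have -> : adjmx x *m (maxentvec d *m (maxentvec d)^T) *m x =
    (adjmx x *m maxentvec d) *m ((maxentvec d)^T *m x) by rewrite !mulmxA.
rewrite [in LHS]mxE [X in _ + X]mxE [X in _ - X]mxE [X in _ - _ * X]mxE big_ord1.
rewrite -[ord0]/(0 : 'I_1).
by rewrite adjmx_mul_maxentvec maxentvec_tr_mul sqr_normc [_^* * _]mulrC.
Qed.

Lemma Phi_t_hermitian_preserving d (t : R) : hermitian_preserving (@Phi_t R d t).
Proof.
move=> X hX; have hX' i j : (X j i)^* = X i j.
  by have := congr1 (fun M : 'M[C]_d => M i j) hX; rewrite !mxE.
apply/matrixP => i j; rewrite !mxE rmorphB rmorphM /= hX' oppr0 rmorphMn eq_sym.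
by congr (_ *+ _ - _); rewrite rmorph_sum; apply: eq_bigr => k _; exact: hX'.
Qed.

Lemma mxtrace_mul_diag_mx n (U V : 'M[C]_n) (r : 'rV[C]_n) :
  \tr (U *m diag_mx r *m V) = \sum_i r 0 i * (V *m U) i i.
Proof.
rewrite mxtrace_mulC mulmxA mul_mx_diag; apply: eq_bigr => i _.
by rewrite mxE mulrC.
Qed.

Lemma mxtrace_mul_adjmx_diag n (s : 'I_n -> R) :
  \tr (diag_mx (\row_i (s i)%:C) *m adjmx (diag_mx (\row_i (s i)%:C))) =
  (\sum_i s i ^+ 2)%:C.
Proof.
rewrite mxtrace_mul_adjmx rmorph_sum; apply: eq_bigr => i _.
rewrite (bigD1 i) //= [X in _ + X]big1 ?addr0 => [|j ji].
  by rewrite !mxE eqxx mulr1n; apply/eqP; rewrite eq_complex /=; simpc.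
by rewrite !mxE (eq_sym i j) (negbTE ji) mulr0n mulr0.
Qed.

Lemma norm_trace_le_sum_schmidt n (A : 'M[C]_n) s :
  schmidt_coeffs A s -> `|\tr A| <= (\sum_i s i)%:C.
Proof.
case=> s0 [_ [U [V [hU [hV ->]]]]].
rewrite mxtrace_mul_diag_mx rmorph_sum; apply: le_trans (ler_norm_sum _ _ _) _.
apply: ler_sum => i _; rewrite normrM mxE ger0_norm ?ler0c //.
rewrite -[X in _ <= X]mulr1 ler_wpM2l ?ler0c //.
exact: unitary_diag_norm_le1 (unitaryM hV hU).
Qed.

Lemma sum_sqr_schmidt d (psi : 'cV[C]_(d * d)) s :
  is_unit_vec psi -> schmidt_coeffs (coefmx psi) s -> \sum_i s i ^+ 2 = 1.
Proof.
move=> hu [_ [_ [U [V [hU [hV hA]]]]]]; apply: complexI.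
rewrite -mxtrace_mul_adjmx_diag -[RHS]hu sqrnorm_coefmx hA !adjmxM ?mulmxA.
by rewrite -(mulmxA _ V) hV mulmx1 [in RHS]mxtrace_mulC !mulmxA (mulmx1C hU) mul1mx.
Qed.

Lemma kfloor_theta_facts d (alpha : R) : 1 <= alpha <= d%:R ->
  [/\ (1 <= kfloor alpha)%N, (kfloor alpha <= d)%N, 0 <= theta_of alpha,
      theta_of alpha < 1 & (0 < theta_of alpha -> (kfloor alpha < d)%N)].
Proof.
move=> /andP [a1 ad]; have a0 : 0 <= alpha by apply: le_trans a1.
have /andP [lo hi] := truncn_itv a0; rewrite -natr1 in hi.
rewrite /theta_of /kfloor; split.
- by rewrite truncn_gt0.
- by rewrite truncn_le_nat -natr1; lra.
- by rewrite subr_ge0.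
- lra.
- by move=> th0; rewrite -(ltr_nat R); lra.
Qed.

Lemma kfloor_add_sqr_theta_gt0 d (alpha : R) : 1 <= alpha <= d%:R ->
  0 < (kfloor alpha)%:R + theta_of alpha ^+ 2.
Proof.
case/kfloor_theta_facts => k1 _ _ _ _.
by apply: ltr_wpDr; [exact: sqr_ge0 | rewrite ltr0n].
Qed.

Definition max_sqr_trace (alpha : R) : R :=
  ((kfloor alpha)%:R + theta_of alpha) ^+ 2 / ((kfloor alpha)%:R + theta_of alpha ^+ 2).

Lemma admissible_sum_schmidt_bound d (alpha : R) (s : 'I_d -> R) :
  1 <= alpha <= d%:R -> (forall i, 0 <= s i) -> \sum_i s i ^+ 2 = 1 ->
  (forall j : 'I_d, (rceil alpha <= j)%N -> s j = 0) ->
  (0 < theta_of alpha -> forall j : 'I_d, nat_of_ord j = kfloor alpha ->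
    s j <= theta_of alpha / (kfloor alpha)%:R *
           \sum_(i : 'I_d | (i < kfloor alpha)%N) s i) ->
  (\sum_i s i) ^+ 2 * ((kfloor alpha)%:R + theta_of alpha ^+ 2)
     <= ((kfloor alpha)%:R + theta_of alpha) ^+ 2.
Proof.
move=> ha s0 s2 s_tail s_last; have [k1 kd th0 th1 thk] := kfloor_theta_facts ha.
have s_tail2 (j : 'I_d) : (rceil alpha <= j)%N -> s j ^+ 2 = 0.
  by move/s_tail ->; rewrite expr0n.
move: s_tail s_tail2 s_last thk k1 kd th0 th1; rewrite /rceil.
set k := kfloor alpha; set th := theta_of alpha => s_tail s_tail2 s_last thk k1 kd th0 th1.
set S := \sum_(i < d | (i < k)%N) s i.
have k1' : 1 <= k%:R :> R by rewrite ler1n.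
have [u [u0 tail tail2 ku]] : exists u : R, [/\ 0 <= u,
    \sum_(j < d | ~~ (j < k)%N) s j = u, \sum_(j < d | ~~ (j < k)%N) s j ^+ 2 = u ^+ 2
    & k%:R * u <= th * S].
  have [th_0|th_n0] := eqVneq th 0;
    rewrite ?th_0 ?eqxx ?(negbTE th_n0) in s_tail s_tail2.
    exists 0; rewrite th_0 mulr0 mul0r expr0n.
    by rewrite (sum_ord_ge0 s_tail) (sum_ord_ge0 s_tail2).
  have thp : 0 < th by rewrite lt_def th_n0 th0.
  have hk := thk thp; exists (s (Ordinal hk)).
  rewrite (sum_ord_ge1 hk s_tail) (sum_ord_ge1 hk s_tail2).
  split=> //; have := s_last thp (Ordinal hk) erefl.
  by rewrite mulrAC ler_pdivlMr ?ltr0n // mulrC.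
have cs := cauchy_schwarz_sum (fun i : 'I_d => (i < k)%N) s.
rewrite /= sum_ord_lt_cst // mulr1 in cs.
rewrite (bigID (fun i : 'I_d => (i < k)%N)) /= in s2.
rewrite (bigID (fun i : 'I_d => (i < k)%N)) /= tail.
apply: sqr_add_mul_le => //; first by apply: sumr_ge0 => i _.
by rewrite -[X in _ * (X - _)]s2 tail2 addrK.
Qed.

Lemma admissible_sqr_trace_le d (alpha : R) (psi : 'cV[C]_(d * d)) :
  1 <= alpha <= d%:R -> admissible alpha psi ->
  `|\tr (coefmx psi)| ^+ 2 <= (max_sqr_trace alpha)%:C.
Proof.
move=> ha [hu [s [hs [s_tail s_last]]]].
have s0 : forall i, 0 <= s i by case: hs.
have hn := norm_trace_le_sum_schmidt hs.
apply: le_trans (_ : ((\sum_i s i) ^+ 2)%:C <= _).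
  by rewrite rmorphXn /= !expr2 ler_pM.
rewrite lecR ler_pdivlMr ?(kfloor_add_sqr_theta_gt0 ha) //.
exact: admissible_sum_schmidt_bound ha s0 (sum_sqr_schmidt hu hs) s_tail s_last.
Qed.

Lemma qform_choi_Phi_t_ge d (alpha t : R) (psi : 'cV[C]_(d * d)) :
  1 <= alpha <= d%:R -> 0 <= t -> admissible alpha psi ->
  (1 - t * max_sqr_trace alpha)%:C <= qform (choi (@Phi_t R d t)) psi.
Proof.
move=> ha t0 hpsi; have htr := admissible_sqr_trace_le ha hpsi.
case: hpsi => hu _; rewrite qform_choi_Phi_t hu rmorphB rmorphM /= lerD2l lerN2.
by rewrite ler_wpM2l // ler0c.
Qed.

Definition diagvec d (s : 'I_d -> R) : 'cV[C]_(d * d) :=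
  \col_a (let ij := mxtens_unindex a in if ij.1 == ij.2 then (s ij.1)%:C else 0).

Lemma coefmx_diagvec d (s : 'I_d -> R) : coefmx (diagvec s) = diag_mx (\row_i (s i)%:C).
Proof.
apply/matrixP => i j; rewrite !mxE mxtens_indexK /=.
by have [->|/negbTE ne] := eqVneq i j; rewrite ?eqxx ?mulr1n // ne mulr0n.
Qed.

Lemma schmidt_coeffs_diagvec d (s : 'I_d -> R) :
  (forall i, 0 <= s i) -> (forall i j : 'I_d, (i <= j)%N -> s j <= s i) ->
  schmidt_coeffs (coefmx (diagvec s)) s.
Proof.
move=> s0 s_noninc; do 2!split=> //; exists 1%:M, 1%:M.
by rewrite coefmx_diagvec mul1mx mulmx1; split; [|split]; try exact: unitary1.
Qed.

Lemma unit_vec_diagvec d (s : 'I_d -> R) :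
  \sum_i s i ^+ 2 = 1 -> is_unit_vec (diagvec s).
Proof.
by move=> s2; rewrite /is_unit_vec sqrnorm_coefmx coefmx_diagvec mxtrace_mul_adjmx_diag s2.
Qed.

Lemma qform_choi_Phi_t_diagvec d (t : R) (s : 'I_d -> R) :
  (forall i, 0 <= s i) -> \sum_i s i ^+ 2 = 1 ->
  qform (choi (@Phi_t R d t)) (diagvec s) = (1 - t * (\sum_i s i) ^+ 2)%:C.
Proof.
move=> s0 s2; rewrite qform_choi_Phi_t (unit_vec_diagvec s2) coefmx_diagvec mxtrace_diag.
rewrite (eq_bigr (fun i => (s i)%:C)) => [|i _]; last by rewrite mxE.
by rewrite -rmorph_sum ger0_norm ?ler0c ?sumr_ge0 // rmorphB rmorphM rmorphXn.
Qed.

Definition witness_coeffs d (alpha : R) : 'I_d -> R := fun j =>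
  if (j < kfloor alpha)%N then (Num.sqrt ((kfloor alpha)%:R + theta_of alpha ^+ 2))^-1
  else if nat_of_ord j == kfloor alpha
       then theta_of alpha / Num.sqrt ((kfloor alpha)%:R + theta_of alpha ^+ 2) else 0.

Section Witness.
Variables (d : nat) (alpha : R).
Hypothesis alpha_range : 1 <= alpha <= d%:R.
Local Notation w := (@witness_coeffs d alpha).
Local Notation k := (kfloor alpha).
Local Notation th := (theta_of alpha).
Local Notation c := (Num.sqrt (k%:R + th ^+ 2))^-1.

Let c_gt0 : 0 < c.
Proof. by rewrite invr_gt0 sqrtr_gt0 (kfloor_add_sqr_theta_gt0 alpha_range). Qed.

Let w_last_zero : k = d -> th = 0.
Proof.
case/andP: alpha_range => _ ad kd; apply/eqP; rewrite eq_le.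
have [_ _ -> _ _] := kfloor_theta_facts alpha_range.
by rewrite /theta_of kd subr_le0 ad.
Qed.

Lemma witness_coeffs_ge0 j : 0 <= w j.
Proof.
have [_ _ th0 _ _] := kfloor_theta_facts alpha_range.
rewrite /witness_coeffs; case: ifP => _; first exact: ltW.
by case: ifP => _ //; rewrite mulr_ge0 // ltW.
Qed.

Lemma witness_coeffs_noninc (i j : 'I_d) : (i <= j)%N -> w j <= w i.
Proof.
have [_ _ th0 th1 _] := kfloor_theta_facts alpha_range.
move=> ij; rewrite /witness_coeffs.
have [jk|kj] := ltnP j k; first by rewrite (leq_ltn_trans ij jk).
have [ik|ki] := ltnP i k.
  case: eqP => _; last exact: ltW.
  by rewrite ler_piMl ?ltW.
have [jk|_] := eqVneq (nat_of_ord j) k.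
  by have -> : nat_of_ord i == k by rewrite eqn_leq ki -jk ij.
by case: ifP => _ //; rewrite mulr_ge0 // ltW.
Qed.

Let witness_coeffsE j :
  w j = if (j < k)%N then c else if nat_of_ord j == k then th * c else 0.
Proof. by []. Qed.

Lemma sum_witness_coeffs : \sum_j w j = (k%:R + th) * c.
Proof.
have [_ kd _ _ _] := kfloor_theta_facts alpha_range.
have last0 : k = d -> th * c = 0 by move/w_last_zero ->; rewrite mul0r.
by rewrite (sum_ord_step kd last0 witness_coeffsE) -mulrDl.
Qed.

Lemma sum_sqr_witness_coeffs : \sum_j w j ^+ 2 = 1.
Proof.
have [_ kd _ _ _] := kfloor_theta_facts alpha_range.
have kth2 := kfloor_add_sqr_theta_gt0 alpha_range.
have last0 : k = d -> (th * c) ^+ 2 = 0 by move/w_last_zero ->; rewrite mul0r expr0n.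
have sqrE j : w j ^+ 2 =
    if (j < k)%N then c ^+ 2 else if nat_of_ord j == k then (th * c) ^+ 2 else 0.
  by rewrite witness_coeffsE; case: ifP => _ //; case: ifP => _ //; rewrite expr0n.
rewrite (sum_ord_step kd last0 sqrE) exprMn exprVn sqr_sqrtr ?ltW // -mulrDl.
by rewrite divff // gt_eqF.
Qed.

Lemma schmidt_coeffs_witness : schmidt_coeffs (coefmx (diagvec w)) w.
Proof. exact: schmidt_coeffs_diagvec witness_coeffs_ge0 witness_coeffs_noninc. Qed.

Lemma admissible_witness : admissible alpha (diagvec w).
Proof.
have [k1 kd _ _ _] := kfloor_theta_facts alpha_range.
split; first exact: unit_vec_diagvec sum_sqr_witness_coeffs.
exists w; split; first exact: schmidt_coeffs_witness.
split=> [j|th0 j jk].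
  rewrite /rceil /witness_coeffs; case: eqP => [th_0|_] hj.
    by rewrite ltnNge hj /=; case: ifP => // _; rewrite th_0 mul0r.
  by rewrite ltnNge (ltnW hj) /= gtn_eqF.
rewrite /witness_coeffs jk ltnn eqxx.
rewrite (eq_bigr (fun _ => c)) => [|i ik]; last by rewrite /witness_coeffs ik.
rewrite sum_ord_lt_cst // mulrA divfK ?pnatr_eq0 -?lt0n //.
Qed.

Lemma qform_witness (t : R) :
  qform (choi (@Phi_t R d t)) (diagvec w) = (1 - t * max_sqr_trace alpha)%:C.
Proof.
rewrite qform_choi_Phi_t_diagvec ?sum_sqr_witness_coeffs //; last exact: witness_coeffs_ge0.
rewrite sum_witness_coeffs exprMn exprVn sqr_sqrtr //.
exact: ltW (kfloor_add_sqr_theta_gt0 alpha_range).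
Qed.

Lemma omega_witness : alpha = d%:R -> omega R d = diagvec w.
Proof.
move=> ad; have kd : k = d by rewrite ad /kfloor natrK.
have th0 : th = 0 by rewrite /theta_of kd ad subrr.
by apply/matrixP => a b; rewrite !mxE /witness_coeffs kd ltn_ord th0 expr0n addr0.
Qed.

End Witness.

End PhiT.

Theorem theorem3p16 (R : realType) (d : nat) (t alpha : R) :
  (2 <= d)%N -> 0 <= t -> 1 <= alpha <= d%:R ->
  let k : R := (kfloor alpha)%:R in
  let th : R := theta_of alpha in
  let tstar : R := (k + th ^+ 2) / (k + th) ^+ 2 in
  (in_P alpha (@Phi_t R d t) <-> t <= tstar) /\
  is_lambda alpha (choi (@Phi_t R d t)) (1 - t * ((k + th) ^+ 2 / (k + th ^+ 2))) /\
  (tstar < t ->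
     exists x, admissible alpha x /\ qform (choi (@Phi_t R d t)) x < 0) /\
  (k < alpha < k + 1 -> tstar < t ->
     exists x, admissible alpha x /\ qform (choi (@Phi_t R d t)) x < 0 /\
       schmidt_coeffs (coefmx x)
         (fun j : 'I_d =>
            if (j < kfloor alpha)%N then (Num.sqrt (k + th ^+ 2))^-1
            else if nat_of_ord j == kfloor alpha
                 then th / Num.sqrt (k + th ^+ 2) else 0)) /\
  (alpha = d%:R -> tstar < t ->
     admissible alpha (omega R d) /\ qform (choi (@Phi_t R d t)) (omega R d) < 0).
Proof.
move=> _ t0 ha k th tstar.
have lam_ge0 : (0 <= 1 - t * max_sqr_trace alpha) = (t <= tstar).
  have [k1 _ th0 _ _] := kfloor_theta_facts ha.
  have kth_gt0 : 0 < (k + th) ^+ 2 by apply/exprn_gt0/ltr_wpDr; rewrite ?ltr0n.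
  rewrite subr_ge0 /tstar ler_pdivlMr // mulrA ler_pdivrMr ?mul1r //.
  exact: kfloor_add_sqr_theta_gt0 ha.
have lower psi := @qform_choi_Phi_t_ge R d alpha t psi ha t0.
pose x := diagvec (@witness_coeffs R d alpha).
have x_adm : admissible alpha x := admissible_witness ha.
have x_q : qform (choi (Phi_t t)) x = (1 - t * max_sqr_trace alpha)%:C := qform_witness ha t.
have x_neg : tstar < t -> qform (choi (Phi_t t)) x < 0.
  by rewrite x_q -[0]/((0 : R)%:C) ltcR !ltNge lam_ge0.
split.
  split=> [[_ /(_ x x_adm)]|le_t]; first by rewrite x_q ler0c lam_ge0.
  split=> [|psi /lower]; first exact: Phi_t_hermitian_preserving.
  by apply: le_trans; rewrite ler0c lam_ge0.
split; first by split=> [|psi /lower //]; exists x.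
split; first by move=> /x_neg; exists x.
split; first by move=> _ /x_neg; exists x; do 2!split=> //; exact: schmidt_coeffs_witness.
by move=> /omega_witness -> /x_neg.
Qed.
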